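(* There exists a real Banach space $Y$ such that for every $\varepsilon>0$ there exists an $\varepsilon$-convex set $A$ contained in the closed unit ball of $Y$ with $\mathcal{H}(A,\operatorname{Co}(A))=2$.
   Context: For $\varepsilon>0$, a set $A$ is $\varepsilon$-convex if $d(ta+(1-t)b,A)\le\varepsilon$ for all $a,b\in A$ and $t\in[0,1]$, where $d(x,A)=\inf_{a\in A}\|x-a\|$. $\mathcal{H}$ is the Hausdorff distance and $\operatorname{Co}$ the convex hull. *)

From HB Require Import structures.
From mathcomp Require Import all_boot all_order all_algebra.
From mathcomp Require Import all_classical all_reals all_analysis.
From mathcomp Require Import Rstruct Rstruct_topology.
Set Implicit Arguments. Unset Strict Implicit. Unset Printing Implicit Defensive.
Import Order.TTheory GRing.Theory Num.Theory.
Import numFieldNormedType.Exports.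
Local Open Scope classical_set_scope.
Local Open Scope ring_scope.

Notation RR := Rdefinitions.R.

Definition setdist (Y : normedModType RR) (x : Y) (A : set Y) : \bar RR :=
  ereal_inf [set (`|x - a|)%:E | a in A].

Definition eps_convex (Y : normedModType RR) (eps : RR) (A : set Y) : Prop :=
  forall a b, A a -> A b -> forall t : RR, 0 <= t <= 1 ->
    (setdist (t *: a + (1 - t) *: b)%R A <= eps%:E)%E.

Definition convex_hull (Y : normedModType RR) (A : set Y) : set Y :=
  [set x | exists (n : nat) (w : 'I_n -> RR) (p : 'I_n -> Y),
      (forall i, 0 <= w i) /\ \sum_(i < n) w i = 1 /\
      (forall i, A (p i)) /\ x = \sum_(i < n) w i *: p i].

Definition hausdorff (Y : normedModType RR) (A B : set Y) : \bar RR :=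
  Order.max (ereal_sup [set setdist a B | a in A])
            (ereal_sup [set setdist b A | b in B]).

From HB Require Import structures.
From mathcomp Require Import all_boot all_order all_algebra.
From mathcomp Require Import all_classical all_reals all_analysis.
From mathcomp Require Import Rstruct Rstruct_topology.
From mathcomp Require Import ring lra.
Set Implicit Arguments. Unset Strict Implicit. Unset Printing Implicit Defensive.
Import Order.TTheory GRing.Theory Num.Theory.
Import numFieldNormedType.Exports.
Local Open Scope classical_set_scope.
Local Open Scope ring_scope.

(* Work in l^oo over the pairs (N, J) of a truncation level N and a set J of naturals.  A
   finitely supported probability vector p goes to the point whose (N, J)-coordinate, when
   ln N >= 4 / eps, is  -1 + 2 (p(J) + H(p) / ln N)  clamped to [-1, 1], where H(p) is the
   entropy of the atoms j < N outside J.  Mass is affine and entropy is concave with mixing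
   defect at most 1, so every coordinate is concave up to 2 / ln N <= eps / 2: the image A is
   eps-convex.  The Dirac mass at i has coordinates +1 or -1 according to i in J.  Take the
   average x of the Dirac masses at 0, ..., Km - 1, and for p let J collect the atoms of mass at
   least 1/K.  At the coordinate (Km, J), x is at most -1 + 2/m, while the image of p is at least
   -1 + 2 ln K / ln (Km), since atoms outside J carry entropy at least ln K per unit of mass.
   For m and then K large this gives distance 2 - eta from x to A, and Co A lies in the unit ball. *)

Section BoundedFunctions.
Variable I : pointedType.

Definition bounded_fun (f : I -> RR) := exists M : RR, forall i, `|f i| <= M.

Record bfun := BFun { bfun_val :> I -> RR; bfun_bounded : bounded_fun bfun_val }.

Lemma bfun_ext (x y : bfun) : (forall i, x i = y i) -> x = y.
Proof.
case: x => f fP; case: y => g gP /= efg.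
have fg : f = g by apply: funext.
by subst g; congr BFun; exact: Prop_irrelevance.
Qed.

HB.instance Definition _ := gen_eqMixin bfun.
HB.instance Definition _ := gen_choiceMixin bfun.

Lemma bounded_fun0 : bounded_fun (fun _ => 0).
Proof. by exists 0 => i; rewrite normr0. Qed.

Lemma bounded_funD f g : bounded_fun f -> bounded_fun g ->
  bounded_fun (fun i => f i + g i).
Proof.
move=> [M fM] [N gN]; exists (M + N) => i.
by rewrite (le_trans (ler_normD _ _))// lerD.
Qed.

Lemma bounded_funN f : bounded_fun f -> bounded_fun (fun i => - f i).
Proof. by move=> [M fM]; exists M => i; rewrite normrN. Qed.

Lemma bounded_funZ (l : RR) f : bounded_fun f -> bounded_fun (fun i => l * f i).
Proof. by move=> [M fM]; exists (`|l| * M) => i; rewrite normrM ler_wpM2l. Qed.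

Definition bfun0 := BFun bounded_fun0.
Definition bfun_add (x y : bfun) := BFun (bounded_funD (bfun_bounded x) (bfun_bounded y)).
Definition bfun_opp (x : bfun) := BFun (bounded_funN (bfun_bounded x)).
Definition bfun_scale (l : RR) (x : bfun) := BFun (bounded_funZ l (bfun_bounded x)).

Lemma bfun_addA : associative bfun_add.
Proof. by move=> x y z; apply: bfun_ext => i /=; rewrite addrA. Qed.
Lemma bfun_addC : commutative bfun_add.
Proof. by move=> x y; apply: bfun_ext => i /=; rewrite addrC. Qed.
Lemma bfun_add0 : left_id bfun0 bfun_add.
Proof. by move=> x; apply: bfun_ext => i /=; rewrite add0r. Qed.
Lemma bfun_addN : left_inverse bfun0 bfun_opp bfun_add.
Proof. by move=> x; apply: bfun_ext => i /=; rewrite addNr. Qed.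

HB.instance Definition _ :=
  GRing.isZmodule.Build bfun bfun_addA bfun_addC bfun_add0 bfun_addN.

Lemma bfun_scaleA a b v : bfun_scale a (bfun_scale b v) = bfun_scale (a * b) v.
Proof. by apply: bfun_ext => i /=; rewrite mulrA. Qed.
Lemma bfun_scale1 : left_id 1 bfun_scale.
Proof. by move=> v; apply: bfun_ext => i /=; rewrite mul1r. Qed.
Lemma bfun_scaleDr : right_distributive bfun_scale +%R.
Proof. by move=> a u v; apply: bfun_ext => i /=; rewrite mulrDr. Qed.
Lemma bfun_scaleDl v : {morph bfun_scale^~ v : a b / a + b}.
Proof. by move=> a b; apply: bfun_ext => i /=; rewrite mulrDl. Qed.

HB.instance Definition _ := GRing.Zmodule_isLmodule.Build RR bfun
  bfun_scaleA bfun_scale1 bfun_scaleDr bfun_scaleDl.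

Lemma bfunD (x y : bfun) i : (x + y) i = x i + y i. Proof. by []. Qed.
Lemma bfunN (x : bfun) i : (- x) i = - x i. Proof. by []. Qed.
Lemma bfunZ l (x : bfun) i : (l *: x) i = l * x i. Proof. by []. Qed.

Lemma bfun_sum n (f : 'I_n -> bfun) i : (\sum_(k < n) f k) i = \sum_(k < n) f k i.
Proof. by elim/big_rec2: _ => // k y1 y2 _ <-. Qed.

Definition sup_norm (x : bfun) : RR := sup [set `|x i| | i in [set: I]].

Lemma has_sup_norm (x : bfun) : has_sup [set `|x i| | i in [set: I]].
Proof.
split; first by exists `|x point|, point.
by case: (bfun_bounded x) => M HM; exists M => _ [i _ <-].
Qed.

Lemma sup_norm_ge (x : bfun) i : `|x i| <= sup_norm x.
Proof. by apply: sup_ubound; [exact: (has_sup_norm x).2 | exists i]. Qed.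

Lemma sup_norm_le (x : bfun) M : (forall i, `|x i| <= M) -> sup_norm x <= M.
Proof.
move=> HM; apply: sup_le_ub; first by exists `|x point|, point.
by move=> _ [i _ <-].
Qed.

Lemma sup_normD (x y : bfun) : sup_norm (x + y) <= sup_norm x + sup_norm y.
Proof.
apply: sup_norm_le => i; rewrite bfunD.
by rewrite (le_trans (ler_normD _ _))// lerD// sup_norm_ge.
Qed.

Lemma sup_normZ (l : RR) (x : bfun) : sup_norm (l *: x) = `|l| * sup_norm x.
Proof.
have normZ_le (k : RR) (y : bfun) : sup_norm (k *: y) <= `|k| * sup_norm y.
  by apply: sup_norm_le => i; rewrite bfunZ normrM ler_wpM2l// sup_norm_ge.
apply/eqP; rewrite eq_le normZ_le /=.
have [->|l0] := eqVneq l 0.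
  by rewrite normr0 mul0r (le_trans _ (sup_norm_ge _ point)).
have := normZ_le l^-1 (l *: x); rewrite scalerA mulVf// scale1r normrV ?unitfE//.
by rewrite -ler_pdivlMl ?normr_gt0// mulrC.
Qed.

Lemma sup_norm0_eq0 (x : bfun) : sup_norm x = 0 -> x = 0.
Proof.
move=> x0; apply: bfun_ext => i; apply/normr0_eq0/eqP.
by rewrite eq_le normr_ge0 andbT -x0 sup_norm_ge.
Qed.

HB.instance Definition _ :=
  Lmodule_isNormed.Build RR bfun sup_normD sup_normZ sup_norm0_eq0.

Lemma bfun_norm_ge (x : bfun) i : `|x i| <= `|x|.
Proof. exact: sup_norm_ge. Qed.

Lemma bfun_norm_le (x : bfun) M : (forall i, `|x i| <= M) -> `|x| <= M.
Proof. exact: sup_norm_le. Qed.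

Lemma bfun_dist_ge (x y : bfun) i : `|x i - y i| <= `|x - y|.
Proof. exact: bfun_norm_ge (x - y) i. Qed.

Lemma bfun_complete (F : set_system bfun) : ProperFilter F -> cauchy F -> cvg F.
Proof.
move=> FF /cauchyP Fc.
have Fi_cvg i : cvg ((fun y : bfun => y i) @ F).
  apply: (@cauchy_cvg (RR : realType)); apply: cauchy_exP => e e0.
  have [x Fx] := Fc e e0; exists (x i).
  change (F [set y : bfun | ball (x i) e (y i)]).
  apply: filterS Fx => y /=; rewrite -!ball_normE /= => xy.
  exact: le_lt_trans (bfun_dist_ge x y i) xy.
pose g i := lim ((fun y : bfun => y i) @ F).
have near_g e x : F (ball x e) -> forall i, `|x i - g i| <= e.
  move=> Fx i; apply/ler_addgt0Pr => e' e'0.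
  have Fg : F [set y : bfun | ball (g i) e' (y i)].
    exact: (@fcvg_ball _ _ _ (fmap_filter _ _) _ (Fi_cvg i) _ e'0).
  have [h [xh gh]] := filter_ex (filterI Fx Fg).
  move: xh gh; rewrite -!ball_normE /= => xh gh.
  rewrite -(subrK (h i) (x i)) -addrA (le_trans (ler_normD _ _))// lerD//.
    by rewrite ltW// (le_lt_trans (bfun_dist_ge x h i)).
  by rewrite distrC ltW.
have g_bounded : bounded_fun g.
  have [x Fx] := Fc 1 ltr01.
  exists (`|x| + 1) => i.
  rewrite -(subrK (x i) (g i)) (le_trans (ler_normD _ _))// addrC lerD//.
    exact: bfun_norm_ge.
  by rewrite distrC near_g.
apply: (@cvgP _ _ (BFun g_bounded)); apply/fcvg_ballP => e e0.
have e30 : 0 < e / 3 by rewrite divr_gt0.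
have [x Fx] := Fc _ e30.
apply: filterS (Fx) => y; rewrite -!ball_normE /= => xy.
apply: (@le_lt_trans _ _ (e / 3 + e / 3)); last lra.
apply: bfun_norm_le => i; rewrite bfunD bfunN /=.
apply: le_trans (ler_distD (x i) (g i) (y i)) _.
rewrite distrC lerD// ?near_g//.
by rewrite ltW// (le_lt_trans (bfun_dist_ge x y i)).
Qed.

HB.instance Definition _ := Uniform_isComplete.Build bfun bfun_complete.

End BoundedFunctions.

Section HullDistance.
Variable Y : normedModType RR.
Implicit Types A B : set Y.

Lemma setdist_ge0 (x : Y) A : (0 <= setdist x A)%E.
Proof. by apply: le_ereal_inf_tmp => _ [a _ <-]; rewrite lee_fin. Qed.

Lemma setdist_le (x a : Y) A : A a -> (setdist x A <= (`|x - a|)%:E)%E.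
Proof. by move=> Aa; apply: ereal_inf_lbound; exists a. Qed.

Lemma hausdorff_sub A B : A `<=` B ->
  hausdorff A B = ereal_sup [set setdist b A | b in B].
Proof.
move=> AB; rewrite /hausdorff; apply: max_r.
have [[b0 Bb0]|B0] := pselect (B !=set0); last first.
  have -> : A = set0 by apply/seteqP; split => // a /AB Ba; apply: B0; exists a.
  by rewrite image_set0 ereal_sup0 leNye.
apply: (@le_trans _ _ 0%E); last first.
  by apply: le_trans (setdist_ge0 b0 A) _; apply: ereal_sup_ubound; exists b0.
apply: ge_ereal_sup => _ [a Aa <-].
by apply: le_trans (setdist_le a (AB _ Aa)) _; rewrite subrr normr0.
Qed.

Lemma sub_convex_hull A : A `<=` convex_hull A.
Proof.
move=> a Aa; exists 1%N, (fun _ => 1), (fun _ => a).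
by rewrite !big_ord1 scale1r; split=> //; split.
Qed.

Lemma convex_hull_norm_le A r : (forall a, A a -> `|a| <= r) ->
  forall b, convex_hull A b -> `|b| <= r.
Proof.
move=> Ar _ [k [w [p [w0 [w1 [Ap ->]]]]]].
apply: le_trans (ler_norm_sum _ _ _) _.
apply: (@le_trans _ _ (\sum_(i < k) w i * r)); last by rewrite -mulr_suml w1 mul1r.
by apply: ler_sum => i _; rewrite normrZ ger0_norm // ler_wpM2l // Ar.
Qed.

Lemma sup_setdist_convex_hull_le A a0 r : A a0 -> (forall a, A a -> `|a| <= r) ->
  (ereal_sup [set setdist b A | b in convex_hull A] <= (2 * r)%:E)%E.
Proof.
move=> Aa0 Ar; apply: ge_ereal_sup => _ [b Cb <-].
apply: le_trans (setdist_le b Aa0) _; rewrite lee_fin.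
apply: le_trans (ler_normB _ _) _.
rewrite (_ : 2 * r = r + r); last by ring.
by apply: lerD; [exact: convex_hull_norm_le Ar _ Cb | exact: Ar].
Qed.

End HullDistance.

Section NegXLnX.
Variable R : realType.
Implicit Types x y s c r t a b : R.

Lemma ln_le_subr1 y : 0 < y -> ln y <= y - 1.
Proof. by move=> y0; have := @le_ln1Dx R (y - 1); rewrite addrCA subrr addr0; apply; lra. Qed.

Definition negxlnx x : R := - (x * ln x).

Lemma negxlnx0 : negxlnx 0 = 0. Proof. by rewrite /negxlnx mul0r oppr0. Qed.
Lemma negxlnx1 : negxlnx 1 = 0. Proof. by rewrite /negxlnx ln1 mulr0 oppr0. Qed.

Lemma negxlnx_ge0 x : 0 <= x <= 1 -> 0 <= negxlnx x.
Proof.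
case/andP => x0 x1; rewrite /negxlnx oppr_ge0.
by have [->|x_gt0] := eqVneq x 0; rewrite ?mul0r// mulr_ge0_le0// ln_le0.
Qed.

(* The tangent line of [negxlnx] at [1/N]. *)
Lemma negxlnx_le_tangent N x : 0 < N -> 0 <= x ->
  negxlnx x <= x * ln N + N^-1 - x.
Proof.
move=> N0 x0; have [->|xn0] := eqVneq x 0.
  by rewrite negxlnx0 mul0r add0r subr0 invr_ge0 ltW.
have xp : 0 < x by rewrite lt_neqAle eq_sym xn0.
have Nx0 : 0 < (N * x)^-1 by rewrite invr_gt0 mulr_gt0.
have := ln_le_subr1 Nx0; rewrite lnV ?posrE ?mulr_gt0 // lnM ?posrE // => ln_Nx.
have -> : N^-1 = x * (N * x)^-1 by rewrite invfM mulrA mulrC mulrA mulVf ?mul1r ?gt_eqF.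
have : x * (- (ln N + ln x)) <= x * ((N * x)^-1 - 1) by rewrite ler_wpM2l // ltW.
rewrite /negxlnx; lra.
Qed.

Lemma negxlnx_ge tau x : 0 < tau -> 0 <= x <= tau -> x * ln tau^-1 <= negxlnx x.
Proof.
move=> t0 /andP[x0 xt]; have [->|xn0] := eqVneq x 0; first by rewrite mul0r negxlnx0.
have xp : 0 < x by rewrite lt_neqAle eq_sym xn0.
rewrite /negxlnx -mulrN ler_wpM2l // -lnV ?posrE //.
by rewrite ler_ln ?posrE ?invr_gt0 // lef_pV2 ?posrE.
Qed.

Lemma mul_ln_ratio_bounds s c r : 0 <= s <= 1 -> 0 <= c -> s * c <= r ->
  s * c - s * r <= s * c * (ln c - ln r) <= c * (1 - s).
Proof.
move=> /andP[s0 s1] c0 scr; have [sc0|sc0] := eqVneq (s * c) 0.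
  rewrite sc0 mul0r mulr_ge0 ?subr_ge0// andbT.
  have : 0 <= s * r by rewrite mulr_ge0// (le_trans _ scr)// sc0.
  lra.
have [sp cp] : 0 < s /\ 0 < c.
  by move: sc0; rewrite !lt_neqAle s0 c0 !andbT; split; apply: contra_neq sc0 => <-;
    rewrite ?mul0r ?mulr0.
have rp : 0 < r by rewrite (lt_le_trans _ scr)// mulr_gt0.
apply/andP; split.
  have := ln_le_subr1 (divr_gt0 rp cp); rewrite ln_div ?posrE // => ln_rc.
  have : s * c * (ln r - ln c) <= s * c * (r / c - 1) by rewrite ler_wpM2l ?mulr_ge0.
  have -> : s * c * (r / c - 1) = s * r - s * c by field; rewrite gt_eqF.
  lra.
(* [r >= s c] gives [ln c - ln r <= - ln s], and [- s ln s <= 1 - s]. *)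
have ln_scr : ln s + ln c <= ln r by rewrite -lnM ?posrE// ler_ln ?posrE// mulr_gt0.
have : 0 < s^-1 by rewrite invr_gt0.
move/ln_le_subr1; rewrite lnV ?posrE // => ln_invs.
have : s * c * (ln c - ln r) <= s * c * (- ln s) by rewrite ler_wpM2l ?mulr_ge0//; lra.
have : s * (- ln s) <= s * (s^-1 - 1) by rewrite ler_wpM2l.
have -> : s * (s^-1 - 1) = 1 - s by field; rewrite gt_eqF.
move=> slns_le; have : c * (s * - ln s) <= c * (1 - s) by rewrite ler_wpM2l.
have : s * c * (- ln s) = c * (s * - ln s) by ring.
lra.
Qed.

Lemma negxlnx_concavity_defect t a b : 0 <= t <= 1 -> 0 <= a -> 0 <= b ->
  0 <= negxlnx (t * a + (1 - t) * b) - t * negxlnx a - (1 - t) * negxlnx b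
    <= a * (1 - t) + b * t.
Proof.
move=> /andP[t0 t1] a0 b0; set r := t * a + (1 - t) * b.
have -> : negxlnx r - t * negxlnx a - (1 - t) * negxlnx b =
   t * a * (ln a - ln r) + (1 - t) * b * (ln b - ln r) by rewrite /negxlnx /r; ring.
have ta0 : 0 <= t * a by rewrite mulr_ge0.
have tb0 : 0 <= (1 - t) * b by rewrite mulr_ge0 // subr_ge0.
have /andP[A1 A2] := @mul_ln_ratio_bounds t a r ltac:(lra) a0 ltac:(rewrite /r; lra).
have /andP[B1 B2] := @mul_ln_ratio_bounds (1 - t) b r ltac:(lra) b0 ltac:(rewrite /r; lra).
have : t * a - t * r + ((1 - t) * b - (1 - t) * r) = 0 by rewrite /r; ring.
have : b * (1 - (1 - t)) = b * t by ring.
lra.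
Qed.

End NegXLnX.

Section TruncatedScore.
Variable R : realType.
Implicit Types (p q : nat -> R) (J : nat -> bool).

Definition is_prob n p :=
  [/\ forall j, 0 <= p j, forall j, (n <= j)%N -> p j = 0 & \sum_(0 <= j < n) p j = 1].

Definition mix (t : R) p q : nat -> R := fun j => t * p j + (1 - t) * q j.

Definition mass n J p : R := \sum_(0 <= j < n | J j) p j.

Definition trunc_entropy N J p : R := \sum_(0 <= j < N | ~~ J j) negxlnx (p j).

Definition score n N J p : R := -1 + 2 * (mass n J p + trunc_entropy N J p / ln N%:R).

Definition clamp1 (y : R) : R := if y <= -1 then -1 else if 1 <= y then 1 else y.

Lemma sum_support n M (P : pred nat) p : (forall j, (n <= j)%N -> p j = 0) ->
  (n <= M)%N -> \sum_(0 <= j < M | P j) p j = \sum_(0 <= j < n | P j) p j.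
Proof.
move=> p0 nM; rewrite (big_cat_nat (leq0n n) nM) /= [X in _ + X]big_nat_cond.
by rewrite [X in _ + X]big1 ?addr0 // => j /andP[/andP[nj _] _]; exact: p0.
Qed.

Lemma is_prob_widen n M p : (n <= M)%N -> is_prob n p -> is_prob M p.
Proof.
move=> nM [p0 pz p1]; split => //; last by rewrite (sum_support xpredT pz nM).
by move=> j Mj; apply: pz; apply: leq_trans Mj.
Qed.

Lemma is_prob_mix n p q t : is_prob n p -> is_prob n q -> 0 <= t <= 1 ->
  is_prob n (mix t p q).
Proof.
move=> [p0 pz p1] [q0 qz q1] /andP[t0 t1]; split.
- by move=> j; rewrite /mix addr_ge0 // mulr_ge0 //; lra.
- by move=> j nj; rewrite /mix pz // qz // !mulr0 addr0.
- by rewrite /mix big_split /= -!mulr_sumr p1 q1; ring.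
Qed.

Lemma prob_sum_le1 n p N (P : pred nat) : is_prob n p -> \sum_(0 <= j < N | P j) p j <= 1.
Proof.
case=> p0 pz <-; rewrite -(sum_support xpredT pz (leq_maxl n N)).
apply: (@le_trans _ _ (\sum_(0 <= j < maxn n N | P j) p j)).
  by rewrite (big_cat_nat (leq0n N) (leq_maxr n N)) /= lerDl; apply: sumr_ge0.
by rewrite [leLHS]big_mkcond /= ler_sum // => j _; case: (P j).
Qed.

Lemma prob_le1 n p j : is_prob n p -> 0 <= p j <= 1.
Proof.
move=> d; have [p0 _ _] := d; rewrite p0 /=.
have := prob_sum_le1 j.+1 xpredT d; rewrite big_nat_recr //=.
have : 0 <= \sum_(0 <= k < j) p k by apply: sumr_ge0.
lra.
Qed.

Lemma mass_ge0 n p J : is_prob n p -> 0 <= mass n J p.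
Proof. by case=> p0 _ _; apply: sumr_ge0. Qed.

Lemma mass_addC_le1 n p N J : is_prob n p ->
  mass n J p + \sum_(0 <= j < N | ~~ J j) p j <= 1.
Proof.
case=> p0 pz p1.
rewrite /mass -(sum_support J pz (leq_maxl n N)) -p1 -(sum_support xpredT pz (leq_maxl n N)).
rewrite [leRHS](bigID J) /= lerD2l (big_cat_nat (leq0n N) (leq_maxr n N)) /= lerDl.
exact: sumr_ge0.
Qed.

Lemma mass_addC_eq1 n p N J : is_prob n p -> (forall j, (N <= j)%N -> J j) ->
  mass n J p + \sum_(0 <= j < N | ~~ J j) p j = 1.
Proof.
case=> p0 pz p1 NJ.
rewrite /mass -(sum_support J pz (leq_maxl n N)) -p1 -(sum_support xpredT pz (leq_maxl n N)).
rewrite [RHS](bigID J) /= (big_cat_nat (P := fun j => ~~ J j) (leq0n N) (leq_maxr n N)) /=.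
rewrite [X in _ = _ + (_ + X)]big_nat_cond [X in _ = _ + (_ + X)]big_pred0 ?addr0 // => j.
by apply/negbTE/negP => /andP[/andP[Nj _]]; rewrite NJ.
Qed.

Lemma mass_mix n J p q t : mass n J (mix t p q) = t * mass n J p + (1 - t) * mass n J q.
Proof. by rewrite /mass /mix big_split /= -!mulr_sumr. Qed.

Lemma trunc_entropy_ge0 n p N J : is_prob n p -> 0 <= trunc_entropy N J p.
Proof. by move=> d; apply: sumr_ge0 => j _; apply/negxlnx_ge0/(prob_le1 j d). Qed.

Lemma trunc_entropy_le n p N J : is_prob n p -> (0 < N)%N ->
  trunc_entropy N J p <= ln N%:R * \sum_(0 <= j < N | ~~ J j) p j + 1.
Proof.
move=> [p0 _ _] N0; have N0' : 0 < (N%:R : R) by rewrite ltr0n.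
apply: (@le_trans _ _ (\sum_(0 <= j < N | ~~ J j) (p j * ln N%:R + N%:R^-1))).
  apply: ler_sum => j _; apply: le_trans (negxlnx_le_tangent N0' (p0 j)) _.
  by rewrite lerBlDr lerDl.
rewrite big_split /= mulr_sumr lerD //; first by apply: ler_sum => j _; rewrite mulrC.
apply: (@le_trans _ _ (\sum_(0 <= j < N) N%:R^-1)).
  by rewrite big_mkcond ler_sum // => j _; case: ifP => _; rewrite ?invr_ge0 ?ler0n.
by rewrite sumr_const_nat subn0 -[_ *+ N]mulr_natr mulVf ?gt_eqF.
Qed.

Lemma score_bounds n p N J : is_prob n p -> 0 < ln (N%:R : R) ->
  -1 <= score n N J p <= 1 + 2 / ln N%:R.
Proof.
move=> d L0; have N0 : (0 < N)%N.
  by rewrite lt0n; apply: contraTneq L0 => ->; rewrite -leNgt ln_le0 ?ler0n.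
rewrite /score; have := trunc_entropy_le J d N0; have := mass_addC_le1 N J d.
have := mass_ge0 J d; have := trunc_entropy_ge0 N J d.
set S := \sum_(0 <= j < N | ~~ J j) p j; set E := trunc_entropy N J p => E0 m0 mS ES.
have : 0 <= E / ln N%:R by rewrite divr_ge0 // ltW.
have : E / ln N%:R <= S + 1 / ln N%:R.
  by rewrite ler_pdivrMr // mulrDl mulrC divfK ?gt_eqF //; lra.
lra.
Qed.

Lemma trunc_entropy_mix_defect n N J p q t : is_prob n p -> is_prob n q -> 0 <= t <= 1 ->
  0 <= trunc_entropy N J (mix t p q) - t * trunc_entropy N J p
         - (1 - t) * trunc_entropy N J q <= 1.
Proof.
move=> dp dq /andP[t0 t1]; have [p0 _ _] := dp; have [q0 _ _] := dq.
have defect j := @negxlnx_concavity_defect R t (p j) (q j) ltac:(lra) (p0 j) (q0 j).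
rewrite /trunc_entropy !mulr_sumr -!sumrB; apply/andP; split.
  by apply: sumr_ge0 => j _; case/andP: (defect j).
apply: (@le_trans _ _ (\sum_(0 <= j < N | ~~ J j) (p j * (1 - t) + q j * t))).
  by apply: ler_sum => j _; case/andP: (defect j).
rewrite big_split /= -!mulr_suml.
have : (\sum_(0 <= j < N | ~~ J j) p j) * (1 - t) <= 1 * (1 - t).
  by rewrite ler_wpM2r ?subr_ge0 // (prob_sum_le1 _ _ dp).
have : (\sum_(0 <= j < N | ~~ J j) q j) * t <= 1 * t.
  by rewrite ler_wpM2r // (prob_sum_le1 _ _ dq).
lra.
Qed.

Lemma score_mix_gap n N J p q t : is_prob n p -> is_prob n q -> 0 <= t <= 1 ->
  0 < ln (N%:R : R) ->
  0 <= score n N J (mix t p q) - (t * score n N J p + (1 - t) * score n N J q)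
    <= 2 / ln N%:R.
Proof.
move=> dp dq t01 L0; have /andP[D0 D1] := trunc_entropy_mix_defect N J dp dq t01.
have -> : score n N J (mix t p q) - (t * score n N J p + (1 - t) * score n N J q) =
    2 / ln N%:R * (trunc_entropy N J (mix t p q) - t * trunc_entropy N J p
                   - (1 - t) * trunc_entropy N J q).
  by rewrite /score mass_mix; field; rewrite gt_eqF.
have c0 : 0 <= 2 / ln (N%:R : R) by rewrite divr_ge0 // ltW.
by rewrite mulr_ge0 //= ler_piMr.
Qed.

Lemma clamp1_norm_le1 y : `|clamp1 y| <= 1.
Proof.
rewrite /clamp1; case: (leP y (-1)) => ?; last case: (leP 1 y) => ?;
  rewrite ler_norml; apply/andP; split; lra.
Qed.

Lemma clamp1_bounds e a : 0 <= e -> -1 <= a <= 1 + e ->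
  [/\ clamp1 a <= 1, clamp1 a <= a, a - e <= clamp1 a & (clamp1 a = 1 \/ clamp1 a = a)].
Proof.
move=> e0 /andP[a1 a2]; rewrite /clamp1; case: (leP a (-1)) => ?.
  have -> : a = -1 by lra.
  split; [lra | lra | lra | by right].
by case: (leP 1 a) => ?; split; try lra; by [left | right].
Qed.

Lemma clamp1_mix e t a b y : 0 <= e -> 0 <= t <= 1 ->
  -1 <= a <= 1 + e -> -1 <= b <= 1 + e -> -1 <= y <= 1 + e ->
  0 <= y - (t * a + (1 - t) * b) <= e ->
  `|t * clamp1 a + (1 - t) * clamp1 b - clamp1 y| <= 2 * e.
Proof.
move=> e0 /andP[t0 t1] ha hb hy /andP[d0 d1].
have [a1 a2 a3 _] := clamp1_bounds e0 ha.
have [b1 b2 b3 _] := clamp1_bounds e0 hb.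
have [_ y2 _ y4] := clamp1_bounds e0 hy.
have t0' : 0 <= 1 - t by lra.
have ? : t * clamp1 a <= t * 1 by rewrite ler_wpM2l.
have ? : t * clamp1 a <= t * a by rewrite ler_wpM2l.
have ? : t * (a - e) <= t * clamp1 a by rewrite ler_wpM2l.
have ? : (1 - t) * clamp1 b <= (1 - t) * 1 by rewrite ler_wpM2l.
have ? : (1 - t) * clamp1 b <= (1 - t) * b by rewrite ler_wpM2l.
have ? : (1 - t) * (b - e) <= (1 - t) * clamp1 b by rewrite ler_wpM2l.
have ? : t * (a - e) + (1 - t) * (b - e) = t * a + (1 - t) * b - e by ring.
rewrite ler_norml; apply/andP; split; first lra.
by case: y4 => ->; lra.
Qed.

Lemma clamp1_score_mix (eps : R) n N J p q t : is_prob n p -> is_prob n q -> 0 <= t <= 1 ->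
  0 < eps -> 4 / eps <= ln (N%:R : R) ->
  `|t * clamp1 (score n N J p) + (1 - t) * clamp1 (score n N J q)
     - clamp1 (score n N J (mix t p q))| <= eps.
Proof.
move=> dp dq t01 e0 NL.
have L0 : 0 < ln (N%:R : R) by rewrite (lt_le_trans _ NL) // divr_gt0.
apply: le_trans (clamp1_mix _ t01 (score_bounds J dp L0) (score_bounds J dq L0)
  (score_bounds J (is_prob_mix dp dq t01) L0) (score_mix_gap J dp dq t01 L0)) _.
  by rewrite divr_ge0 // ltW.
have -> : 2 * (2 / ln (N%:R : R)) = 4 / ln N%:R by rewrite mulrA; congr (_ / _); ring.
by rewrite ler_pdivrMr // mulrC -ler_pdivrMr.
Qed.

Lemma trunc_entropy_ge n p N J (K : R) : is_prob n p -> 0 < K ->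
  (forall j, ~~ J j -> p j <= K^-1) ->
  ln K * \sum_(0 <= j < N | ~~ J j) p j <= trunc_entropy N J p.
Proof.
move=> [p0 _ _] K0 light; rewrite /trunc_entropy mulr_sumr; apply: ler_sum => j nJ.
by rewrite mulrC -[K in ln K]invrK negxlnx_ge ?invr_gt0 ?p0 ?light.
Qed.

Lemma clamp1_score_ge n p N J (K : R) : is_prob n p -> 0 < K -> 0 < ln (N%:R : R) ->
  ln K <= ln N%:R -> (forall j, (N <= j)%N -> J j) -> (forall j, ~~ J j -> p j <= K^-1) ->
  -1 + 2 * (ln K / ln N%:R) <= clamp1 (score n N J p).
Proof.
move=> d K0 L0 KN tailJ light.
have := trunc_entropy_ge N d K0 light; have := mass_addC_eq1 d tailJ.
have := mass_ge0 J d; have := score_bounds J d L0.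
set S := \sum_(0 <= j < N | ~~ J j) p j; set lam := ln K / ln N%:R => sc m0 mS ES.
have lam1 : lam <= 1 by rewrite ler_pdivrMr ?mul1r.
have : lam * S <= trunc_entropy N J p / ln N%:R.
  by rewrite ler_pdivlMr // mulrAC divfK ?gt_eqF.
have : lam * mass n J p <= mass n J p by rewrite ler_piMl.
have : lam * mass n J p + lam * S = lam by rewrite -mulrDr mS mulr1.
have e0 : 0 <= 2 / ln (N%:R : R) by rewrite divr_ge0 // ltW.
have [_ c2 _ [->|->]] := clamp1_bounds e0 sc; rewrite /score; lra.
Qed.

Lemma avg_sign_le N J p (K : R) : (0 < N)%N -> 0 <= K -> (forall i, 0 <= p i) ->
  \sum_(i < N) p i <= 1 -> (forall i : 'I_N, J i -> 1 <= K * p i) ->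
  N%:R^-1 * \sum_(i < N) (if J i then 1 else -1) <= -1 + 2 * K / N%:R.
Proof.
move=> N0 K0 p0 p1 heavy; have N0' : 0 < (N%:R : R) by rewrite ltr0n.
apply: (@le_trans _ _ (N%:R^-1 * \sum_(i < N) (-1 + 2 * K * p i))).
  rewrite ler_wpM2l ?invr_ge0 ?ler0n// ler_sum // => i _.
  have : 0 <= K * p i by rewrite mulr_ge0.
  by case: ifP => [/heavy|_]; lra.
rewrite big_split /= sumr_const card_ord -mulr_sumr mulrDr.
have -> : N%:R^-1 * (-1 *+ N) = -1 :> R.
  by rewrite -[-1 *+ N]mulr_natr mulN1r mulrN mulVf ?gt_eqF.
rewrite lerD2l (_ : _ * (2 * K * _) = 2 * K * ((\sum_(i < N) p i) * N%:R^-1)); last by ring.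
by rewrite ler_wpM2l ?mulr_ge0 // ler_piMl ?invr_ge0 ?ler0n.
Qed.

End TruncatedScore.

Definition index := (nat * (nat -> bool))%type.

Definition delta (i : nat) : nat -> RR := fun k => if k == i then 1 else 0.

Lemma is_prob_delta i : is_prob i.+1 (delta i).
Proof.
split=> [k|k ik|]; rewrite /delta; first by case: eqP.
  by case: eqP ik => // ->; rewrite ltnn.
rewrite big_nat_recr //= eqxx big_nat_cond big1 ?add0r // => k /andP[/andP[_ ki] _].
by rewrite ltn_eqF.
Qed.

Lemma clamp1_score_delta i N J :
  clamp1 (score i.+1 N J (delta i)) = if J i then 1 else -1.
Proof.
rewrite /score; have -> : mass i.+1 J (delta i) = (J i)%:R.
  rewrite /mass big_mkcond big_nat_recr //= /delta eqxx big_nat_cond big1 ?add0r.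
    by case: (J i).
  by move=> k /andP[/andP[_ ki] _]; rewrite ltn_eqF //; case: (J k).
have -> : trunc_entropy N J (delta i) = 0.
  by rewrite /trunc_entropy big1 // => k _; rewrite /delta; case: eqP; rewrite ?negxlnx0 ?negxlnx1.
rewrite mul0r addr0 /clamp1; case: (J i) => /=.
  by rewrite ifF ?ifT; lra.
by rewrite ifT; lra.
Qed.

Section Embedding.
Variable eps : RR.
Hypothesis eps_gt0 : 0 < eps.

Definition active (N : nat) : bool := 4 / eps <= ln (N%:R : RR).

Definition embed_coord n p (i : index) : RR :=
  if active i.1 then clamp1 (score n i.1 i.2 p) else 0.

Lemma embed_coord_norm_le1 n p i : `|embed_coord n p i| <= 1.
Proof. by rewrite /embed_coord; case: ifP; rewrite ?clamp1_norm_le1 ?normr0. Qed.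

Definition embed n p : bfun index := BFun (ex_intro _ 1 (embed_coord_norm_le1 n p)).

Definition prob_image : set (bfun index) :=
  [set y | exists n p, is_prob n p /\ y = embed n p].

Lemma embed_widen n M p : (n <= M)%N -> is_prob n p -> embed n p = embed M p.
Proof.
move=> nM [_ pz _]; apply: bfun_ext => -[N J].
by rewrite /= /embed_coord /score /mass (sum_support J pz nM).
Qed.

Lemma prob_image_norm_le1 a : prob_image a -> `|a| <= 1.
Proof. by move=> [n [p [_ ->]]]; apply: bfun_norm_le => i; apply: embed_coord_norm_le1. Qed.

(* The image of [mix t p q] is within [eps] of the segment point. *)
Lemma prob_image_eps_convex : eps_convex eps prob_image.
Proof.
move=> _ _ [n [p [dp ->]]] [m [q [dq ->]]] t t01.
rewrite (embed_widen (leq_maxl n m) dp) (embed_widen (leq_maxr n m) dq).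
have dp' := is_prob_widen (leq_maxl n m) dp; have dq' := is_prob_widen (leq_maxr n m) dq.
apply: le_trans (setdist_le _ (_ : prob_image (embed (maxn n m) (mix t p q)))) _.
  by exists (maxn n m), (mix t p q); split => //; apply: is_prob_mix.
rewrite lee_fin; apply: bfun_norm_le => -[N J] /=.
rewrite /embed_coord /=; case: ifP => NL; last by rewrite !mulr0 addr0 subr0 normr0 ltW.
exact: clamp1_score_mix.
Qed.

Lemma exists_scales eta : 0 < eta -> exists K m : nat,
  [/\ (0 < K)%N, (0 < m)%N, active (K * m), 4 / m%:R < eta
    & 4 * ln (m%:R : RR) <= eta * ln (K%:R : RR)].
Proof.
move=> eta0; have h40 : 0 < 4 / eta by rewrite divr_gt0.
set m := Num.bound (4 / eta); have m_gt : 4 / eta < m%:R := archi_boundP (ltW h40).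
have m0 : 0 < (m%:R : RR) by apply: lt_trans m_gt.
have lnm0 : 0 <= ln (m%:R : RR) by rewrite ln_ge0 // ler1n -(ltr0n RR).
set B := 4 * ln (m%:R : RR) / eta + 4 / eps.
set K := Num.bound (expR B); have K_gt : expR B < K%:R := archi_boundP (ltW (expR_gt0 B)).
have K0 : 0 < (K%:R : RR) by apply: lt_trans K_gt; exact: expR_gt0.
have BK : B <= ln K%:R by rewrite -[B]expRK ler_ln ?posrE ?expR_gt0 // ltW.
rewrite /B in BK.
have ? : 0 <= 4 * ln (m%:R : RR) / eta by rewrite !mulr_ge0 ?invr_ge0 // ltW.
have ? : 0 < 4 / eps by rewrite divr_gt0.
exists K, m; split; rewrite -?(ltr0n RR) //.
- by rewrite /active natrM lnM ?posrE //; lra.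
- by rewrite ltr_pdivrMr // mulrC -ltr_pdivrMr.
- have : eta * (4 * ln (m%:R : RR) / eta) <= eta * ln (K%:R : RR).
    by rewrite ler_wpM2l ?ltW //; lra.
  by rewrite mulrCA mulfV ?gt_eqF // mulr1.
Qed.

Lemma prob_image_far eta : 0 < eta ->
  exists2 x, convex_hull prob_image x & ((2 - eta)%:E <= setdist x prob_image)%E.
Proof.
move=> eta0; have [K [m [K0 m0 NL mL Km]]] := exists_scales eta0.
set N := (K * m)%N; have N0 : (0 < N)%N by rewrite muln_gt0 K0.
have L0 : 0 < ln (N%:R : RR) by rewrite (lt_le_trans _ NL) // divr_gt0.
have K0' : 0 < (K%:R : RR) by rewrite ltr0n.
have lnm0 : 0 <= ln (m%:R : RR) by rewrite ln_ge0 // ler1n.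
have lnN : ln (N%:R : RR) = ln K%:R + ln m%:R by rewrite natrM lnM ?posrE ?ltr0n.
set x := \sum_(i < N) N%:R^-1 *: embed i.+1 (delta i).
exists x.
  exists N, (fun=> N%:R^-1), (fun i => embed i.+1 (delta i)).
  split=> [i|]; first by rewrite invr_ge0.
  split; first by rewrite sumr_const card_ord -[_ *+ N]mulr_natr mulVf ?gt_eqF ?ltr0n.
  by split => // i; exists i.+1, (delta i); split => //; apply: is_prob_delta.
apply: le_ereal_inf_tmp => _ [_ [n [p [dp ->]]] <-]; rewrite lee_fin.
have [p0 _ _] := dp; set J := fun j => (N <= j)%N || (K%:R^-1 <= p j).
have x_le : x (N, J) <= -1 + 2 / m%:R.
  have -> : x (N, J) = N%:R^-1 * \sum_(i < N) (if J i then 1 else -1).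
    rewrite bfun_sum mulr_sumr; apply: eq_bigr => i _.
    by rewrite bfunZ /= /embed_coord /= NL clamp1_score_delta.
  apply: le_trans (avg_sign_le N0 (ler0n _ K) p0 _ _) _.
  - by have := prob_sum_le1 N xpredT dp; rewrite big_mkord.
  - move=> i; rewrite /J (ltn_geF (ltn_ord i)) /= => Kp.
    by move: (ler_wpM2l (ltW K0') Kp); rewrite mulfV ?gt_eqF.
  rewrite /N natrM (_ : 2 * K%:R / _ = 2 / m%:R) //; field.
  by rewrite !pnatr_eq0 -!lt0n K0 m0.
have y_ge : -1 + 2 * (ln K%:R / ln N%:R) <= embed n p (N, J).
  rewrite /= /embed_coord /= NL; apply: clamp1_score_ge => //; first by rewrite lnN; lra.
    by move=> j Nj; rewrite /J Nj.
  by move=> j; rewrite negb_or => /andP[_]; rewrite -ltNge => /ltW.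
have lam_ge : 1 - eta / 4 <= ln K%:R / ln (N%:R : RR).
  rewrite ler_pdivlMr // lnN.
  have : 0 <= eta * ln (m%:R : RR) by rewrite mulr_ge0 // ltW.
  lra.
have : 2 / m%:R < eta / 2 by move: mL; rewrite !ltr_pdivrMr ?ltr0n //; lra.
move=> m_eta; have : 2 - eta <= embed n p (N, J) - x (N, J) by lra.
move/le_trans; apply; rewrite distrC.
exact: le_trans (ler_norm _) (bfun_dist_ge _ _ _).
Qed.

End Embedding.

Theorem theorem7p10 :
  exists Y : completeNormedModType RR,
    forall eps : RR, 0 < eps ->
      exists A : set Y,
        eps_convex eps A /\ (forall a, A a -> `|a| <= 1) /\
        hausdorff A (convex_hull A) = 2%:E.
Proof.
exists (bfun index) => eps eps0; exists (prob_image eps).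
split; first exact: prob_image_eps_convex.
split; first exact: prob_image_norm_le1.
rewrite hausdorff_sub; last exact: sub_convex_hull.
have A_delta0 : prob_image eps (embed eps 1 (delta 0)).
  by exists 1%N, (delta 0); split => //; apply: is_prob_delta.
apply/eqP; rewrite eq_le; apply/andP; split.
  by rewrite -[2]mulr1 (sup_setdist_convex_hull_le A_delta0 (@prob_image_norm_le1 eps)).
apply/lee_subgt0Pr => eta eta0; have [x Cx far] := prob_image_far eps0 eta0.
by rewrite -EFinB; apply: le_trans far _; apply: ereal_sup_ubound; exists x.
Qed.
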